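(* Let $\langle X,d\rangle$ be a metric space with completion $\langle\widehat{X},\widehat{d}\rangle$. The following are equivalent: (1) $\widehat{X}$ is cofinally Bourbaki quasi-complete; (2) $\widehat{X}$ is cofinally complete and every CC-regular function from $X$ to any metric space $\langle Y,\rho\rangle$ maps cofinally Bourbaki quasi-Cauchy sequences to cofinally Cauchy sequences; (3) $\widehat{X}$ is cofinally complete and every real-valued CC-regular function on $X$ maps cofinally Bourbaki quasi-Cauchy sequences to cofinally Cauchy sequences; (4) $\widehat{X}$ is cofinally complete and every cofinally Bourbaki quasi-Cauchy sequence in $X$ is cofinally Cauchy.
   Context: For $\varepsilon>0$, an $\varepsilon$-chain joining $x,y$ is a finite sequence $x=x_0,\dots,x_n=y$ with consecutive distances $<\varepsilon$. A sequence $\langle x_n\rangle$ in a metric space is cofinally Bourbaki quasi-Cauchy if for every $\varepsilon>0$ there is an infinite $N_\varepsilon\subseteq\mathbb{N}$ such that any $x_j,x_k$ with $j,k\in N_\varepsilon$ can be joined by an $\varepsilon$-chain in that space; a space is cofinally Bourbaki quasi-complete if every such sequence has a cluster point. A sequence $\langle y_n\rangle$ in $\langle Y,\rho\rangle$ is cofinally Cauchy if for every $\varepsilon>0$ there is an infinite $N_\varepsilon\subseteq\mathbb{N}$ with $\rho(y_n,y_m)<\varepsilon$ for all $n,m\in N_\varepsilon$; a space is cofinally complete if every cofinally Cauchy sequence has a cluster point. A function is CC-regular if it maps cofinally Cauchy sequences to cofinally Cauchy sequences. *)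

From Stdlib Require Import Reals Lra.
Open Scope R_scope.

Definition is_metric {T : Type} (d : T -> T -> R) : Prop :=
  (forall x y, 0 <= d x y) /\
  (forall x y, d x y = 0 <-> x = y) /\
  (forall x y, d x y = d y x) /\
  (forall x y z, d x z <= d x y + d y z).

Definition infinite_nat (N : nat -> Prop) : Prop :=
  forall m : nat, exists n : nat, (m <= n)%nat /\ N n.

Definition eps_chain {T : Type} (d : T -> T -> R) (eps : R) (x y : T) : Prop :=
  exists (n : nat) (c : nat -> T),
    c 0%nat = x /\ c n = y /\ (forall i, (i < n)%nat -> d (c i) (c (S i)) < eps).

Definition cofinally_BQC {T : Type} (d : T -> T -> R) (x : nat -> T) : Prop :=
  forall eps, 0 < eps ->
    exists N : nat -> Prop, infinite_nat N /\
      forall j k, N j -> N k -> eps_chain d eps (x j) (x k).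

Definition cofinally_cauchy {T : Type} (d : T -> T -> R) (x : nat -> T) : Prop :=
  forall eps, 0 < eps ->
    exists N : nat -> Prop, infinite_nat N /\
      forall n m, N n -> N m -> d (x n) (x m) < eps.

Definition cluster_point {T : Type} (d : T -> T -> R) (x : nat -> T) (p : T) : Prop :=
  forall eps, 0 < eps -> forall m : nat, exists n, (m <= n)%nat /\ d (x n) p < eps.

Definition cofinally_BQ_complete {T : Type} (d : T -> T -> R) : Prop :=
  forall x : nat -> T, cofinally_BQC d x -> exists p, cluster_point d x p.

Definition cofinally_complete {T : Type} (d : T -> T -> R) : Prop :=
  forall x : nat -> T, cofinally_cauchy d x -> exists p, cluster_point d x p.

Definition CC_regular {X Y : Type} (dX : X -> X -> R) (dY : Y -> Y -> R)
  (f : X -> Y) : Prop :=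
  forall x : nat -> X, cofinally_cauchy dX x -> cofinally_cauchy dY (fun n => f (x n)).

Definition cauchy_seq {T : Type} (d : T -> T -> R) (x : nat -> T) : Prop :=
  forall eps, 0 < eps -> exists N : nat, forall n m, (N <= n)%nat -> (N <= m)%nat ->
    d (x n) (x m) < eps.

Definition converges_to {T : Type} (d : T -> T -> R) (x : nat -> T) (p : T) : Prop :=
  forall eps, 0 < eps -> exists N : nat, forall n, (N <= n)%nat -> d (x n) p < eps.

Definition complete_metric {T : Type} (d : T -> T -> R) : Prop :=
  forall x, cauchy_seq d x -> exists p, converges_to d x p.

Definition is_completion {X Xh : Type} (dX : X -> X -> R) (dXh : Xh -> Xh -> R)
  (i : X -> Xh) : Prop :=
  is_metric dXh /\ complete_metric dXh /\
  (forall a b, dXh (i a) (i b) = dX a b) /\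
  (forall p eps, 0 < eps -> exists a, dXh (i a) p < eps).

Definition dist_R (a b : R) : R := Rabs (a - b).

From Stdlib Require Import Reals Lra Lia Classical ClassicalEpsilon.
Open Scope R_scope.

(* (1) => (2): a cofinally Bourbaki quasi-Cauchy sequence of X stays one in
   the completion, where it clusters; so it is cofinally Cauchy there, hence
   in X.  (4) => (1): replace a sequence of the completion by points of X at
   distance < 1/(n+1); by density every eps-chain of the completion is
   shadowed by a 3 eps-chain of X.  (3) => (4): if (x_n) has no cluster point
   in the completion, near every point only finitely many of the bumps
   n * max(0, 1 - (n+1) d(q, x_n)) are nonzero, so their supremum F is
   continuous; on a cofinally complete space continuous maps are CC-regular,
   yet F(x_n) >= n is not cofinally Cauchy. *)

Lemma inv_INR_S_eventually_lt (e : R) :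
  0 < e -> exists K : nat, forall n, (K <= n)%nat -> / INR (S n) < e.
Proof.
  intros He. destruct (archimed_cor1 e He) as [K [HK HK0]].
  exists K. intros n Hn.
  apply Rle_lt_trans with (/ INR K); [|exact HK].
  apply Rinv_le_contravar; [apply lt_0_INR; exact HK0 | apply le_INR; lia].
Qed.

Lemma infinite_nat_tail (N : nat -> Prop) (K : nat) :
  infinite_nat N -> infinite_nat (fun n => N n /\ (K <= n)%nat).
Proof.
  intros HN m. destruct (HN (Nat.max m K)) as [n [Hn HNn]].
  exists n. repeat split; [lia | exact HNn | lia].
Qed.

Lemma is_metric_dist_R : is_metric dist_R.
Proof.
  unfold is_metric, dist_R. repeat split.
  - intros; apply Rabs_pos.
  - intros Hxy. destruct (Req_dec (x - y) 0) as [H0|H0]; [lra|].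
    now apply Rabs_no_R0 in H0.
  - intros ->. unfold Rminus. rewrite Rplus_opp_r. apply Rabs_R0.
  - intros; apply Rabs_minus_sym.
  - intros x y z. replace (x - z) with ((x - y) + (y - z)) by ring. apply Rabs_triang.
Qed.

Section Metric.
Context {T : Type} (d : T -> T -> R).

Lemma eps_chain_refl e x : eps_chain d e x x.
Proof. exists 0%nat, (fun _ => x). repeat split. intros t Ht; lia. Qed.

Lemma eps_chain_cons e x y z : d x y < e -> eps_chain d e y z -> eps_chain d e x z.
Proof.
  intros Hxy [n [c [H0 [Hn Hs]]]].
  exists (S n), (fun t => match t with O => x | S t => c t end).
  repeat split; [exact Hn|].
  intros [|t] Ht; simpl; [rewrite H0; exact Hxy | apply Hs; lia].
Qed.

Lemma eps_chain_single e x y : d x y < e -> eps_chain d e x y.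
Proof. intros Hxy. apply eps_chain_cons with y; [exact Hxy | apply eps_chain_refl]. Qed.

Lemma cofinally_cauchy_BQC x : cofinally_cauchy d x -> cofinally_BQC d x.
Proof.
  intros H eps He. destruct (H eps He) as [N [HN Hd]].
  exists N. split; [exact HN|]. intros j k Hj Hk. apply eps_chain_single, Hd; assumption.
Qed.

Lemma cofinally_BQ_complete_cofinally_complete :
  cofinally_BQ_complete d -> cofinally_complete d.
Proof. intros H x Hx. apply H, cofinally_cauchy_BQC, Hx. Qed.

Hypothesis Hm : is_metric d.

Lemma metric_nonneg x y : 0 <= d x y.
Proof. destruct Hm as [H _]. apply H. Qed.

Lemma metric_refl x : d x x = 0.
Proof. destruct Hm as [_ [H _]]. now apply H. Qed.

Lemma metric_sym x y : d x y = d y x.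
Proof. destruct Hm as [_ [_ [H _]]]. apply H. Qed.

Lemma metric_triangle x y z : d x z <= d x y + d y z.
Proof. destruct Hm as [_ [_ [_ H]]]. apply H. Qed.

Lemma metric_triangle_l x y z : d x z <= d y x + d y z.
Proof. rewrite (metric_sym y x). apply metric_triangle. Qed.

Lemma metric_triangle_r x y z : d x z <= d x y + d z y.
Proof. rewrite (metric_sym z y). apply metric_triangle. Qed.

Lemma cluster_point_cofinally_cauchy x p : cluster_point d x p -> cofinally_cauchy d x.
Proof.
  intros Hp eps He. exists (fun n => d (x n) p < eps / 2). split.
  - intro m. apply Hp. lra.
  - intros n m Hn Hm'. pose proof (metric_triangle_r (x n) p (x m)). lra.
Qed.

Lemma cluster_point_close_seq (y z : nat -> T) p :
  (forall n, d (z n) (y n) < / INR (S n)) -> cluster_point d z p -> cluster_point d y p.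
Proof.
  intros Hzy Hp eps He m.
  destruct (inv_INR_S_eventually_lt (eps / 2)) as [K HK]; [lra|].
  destruct (Hp (eps / 2) ltac:(lra) (Nat.max m K)) as [n [Hn Hnp]].
  exists n. split; [lia|].
  pose proof (metric_triangle_l (y n) (z n) p). specialize (Hzy n). specialize (HK n ltac:(lia)).
  lra.
Qed.

End Metric.

Section Isometry.
Context {X Y : Type} (dX : X -> X -> R) (dY : Y -> Y -> R) (i : X -> Y).
Hypothesis Hiso : forall a b, dY (i a) (i b) = dX a b.

Lemma isometry_eps_chain e a b : eps_chain dX e a b -> eps_chain dY e (i a) (i b).
Proof.
  intros [n [c [H0 [Hn Hs]]]]. exists n, (fun t => i (c t)).
  split; [now rewrite H0|]. split; [now rewrite Hn|].
  intros t Ht. rewrite Hiso. apply Hs, Ht.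
Qed.

Lemma isometry_cofinally_BQC x : cofinally_BQC dX x -> cofinally_BQC dY (fun n => i (x n)).
Proof.
  intros H eps He. destruct (H eps He) as [N [HN Hc]].
  exists N. split; [exact HN|]. intros j k Hj Hk. apply isometry_eps_chain, Hc; assumption.
Qed.

Lemma isometry_cofinally_cauchy x :
  cofinally_cauchy dY (fun n => i (x n)) <-> cofinally_cauchy dX x.
Proof. unfold cofinally_cauchy. setoid_rewrite Hiso. reflexivity. Qed.

Lemma isometry_CC_regular : CC_regular dX dY i.
Proof. intros x Hx. apply isometry_cofinally_cauchy, Hx. Qed.

Hypothesis HmY : is_metric dY.

Lemma cofinally_BQC_cauchy_of_BQ_complete :
  cofinally_BQ_complete dY -> forall x, cofinally_BQC dX x -> cofinally_cauchy dX x.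
Proof.
  intros H x Hx. destruct (H _ (isometry_cofinally_BQC x Hx)) as [p Hp].
  apply isometry_cofinally_cauchy. exact (cluster_point_cofinally_cauchy dY HmY _ p Hp).
Qed.

Hypothesis Hdense : forall p eps, 0 < eps -> exists a, dY (i a) p < eps.

Lemma dense_eps_chain e : 0 < e -> forall n (c : nat -> Y) a b,
  (forall t, (t < n)%nat -> dY (c t) (c (S t)) < e) ->
  dY (i a) (c 0%nat) < e -> dY (i b) (c n) < e -> eps_chain dX (3 * e) a b.
Proof.
  intros He n. induction n as [|n IH]; intros c a b Hs Ha Hb.
  - apply eps_chain_single. rewrite <- Hiso.
    pose proof (metric_triangle_r dY HmY (i a) (c 0%nat) (i b)). lra.
  - destruct (Hdense (c 1%nat) e He) as [a1 Ha1].
    apply eps_chain_cons with a1.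
    + rewrite <- Hiso.
      pose proof (metric_triangle dY HmY (i a) (c 0%nat) (i a1)).
      pose proof (metric_triangle_r dY HmY (c 0%nat) (c 1%nat) (i a1)).
      pose proof (Hs 0%nat ltac:(lia)). lra.
    + apply (IH (fun t => c (S t))); [intros t Ht; apply Hs; lia | exact Ha1 | exact Hb].
Qed.

Lemma dense_approx_seq (y : nat -> Y) :
  exists x : nat -> X, forall n, dY (i (x n)) (y n) < / INR (S n).
Proof.
  apply (choice (fun n a => dY (i a) (y n) < / INR (S n))). intro n. apply Hdense. apply Rinv_0_lt_compat, lt_0_INR. lia.
Qed.

Lemma dense_approx_cofinally_BQC (y : nat -> Y) (x : nat -> X) :
  (forall n, dY (i (x n)) (y n) < / INR (S n)) -> cofinally_BQC dY y -> cofinally_BQC dX x.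
Proof.
  intros Hxy Hy eps He.
  destruct (Hy (eps / 3)) as [N [HN Hc]]; [lra|].
  destruct (inv_INR_S_eventually_lt (eps / 3)) as [K HK]; [lra|].
  exists (fun n => N n /\ (K <= n)%nat). split; [apply infinite_nat_tail, HN|].
  intros j k [Hj Hjk] [Hk Hkk].
  destruct (Hc j k Hj Hk) as [n [c [H0 [Hn Hs]]]].
  replace eps with (3 * (eps / 3)) by field.
  apply (dense_eps_chain (eps / 3)) with n c; [lra | exact Hs | rewrite H0 | rewrite Hn].
  - specialize (Hxy j). specialize (HK j Hjk). lra.
  - specialize (Hxy k). specialize (HK k Hkk). lra.
Qed.

Lemma dense_cofinally_BQ_complete :
  cofinally_complete dY -> (forall x, cofinally_BQC dX x -> cofinally_cauchy dX x) ->
  cofinally_BQ_complete dY.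
Proof.
  intros Hcc H y Hy. destruct (dense_approx_seq y) as [x Hxy].
  destruct (Hcc (fun n => i (x n))) as [p Hp].
  { apply isometry_cofinally_cauchy, H, (dense_approx_cofinally_BQC y); assumption. }
  exists p. apply (cluster_point_close_seq dY HmY y (fun n => i (x n))); assumption.
Qed.

End Isometry.

Definition continuous_at {T U : Type} (dT : T -> T -> R) (dU : U -> U -> R)
  (f : T -> U) (p : T) : Prop :=
  forall eps, 0 < eps -> exists delta, 0 < delta /\
    forall q, dT q p < delta -> dU (f q) (f p) < eps.

Lemma lipschitz_at_continuous_at {T U : Type} (dT : T -> T -> R) (dU : U -> U -> R)
  (f : T -> U) (p : T) (delta L : R) :
  0 < delta -> 0 <= L -> (forall q, dT q p < delta -> dU (f q) (f p) <= L * dT q p) ->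
  continuous_at dT dU f p.
Proof.
  intros Hdelta HL Hf eps He.
  exists (Rmin delta (eps / (L + 1))). split.
  { apply Rmin_pos; [exact Hdelta | apply Rdiv_lt_0_compat; lra]. }
  intros q Hq. pose proof (Rmin_l delta (eps / (L + 1))) as H1.
  pose proof (Rmin_r delta (eps / (L + 1))) as H2.
  apply Rle_lt_trans with (L * dT q p); [apply Hf; lra|].
  assert (Heps : (L + 1) * (eps / (L + 1)) = eps) by (field; lra).
  destruct (Rle_or_lt (dT q p) 0); nra.
Qed.

Lemma continuous_at_cluster_point {T U : Type} (dT : T -> T -> R) (dU : U -> U -> R)
  (f : T -> U) (z : nat -> T) (p : T) :
  continuous_at dT dU f p -> cluster_point dT z p -> cluster_point dU (fun n => f (z n)) (f p).
Proof.
  intros Hf Hp eps He m. destruct (Hf eps He) as [delta [Hdelta Hq]].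
  destruct (Hp delta Hdelta m) as [n [Hn Hnp]]. exists n. split; [exact Hn | apply Hq, Hnp].
Qed.

Lemma continuous_CC_regular {T U : Type} (dT : T -> T -> R) (dU : U -> U -> R) (f : T -> U) :
  is_metric dU -> cofinally_complete dT -> (forall p, continuous_at dT dU f p) ->
  CC_regular dT dU f.
Proof.
  intros HmU Hcc Hf z Hz. destruct (Hcc z Hz) as [p Hp].
  apply (cluster_point_cofinally_cauchy dU HmU _ (f p)), (continuous_at_cluster_point dT); auto.
Qed.

Lemma CC_regular_comp {X Y Z : Type} (dX : X -> X -> R) (dY : Y -> Y -> R) (dZ : Z -> Z -> R)
  (f : X -> Y) (g : Y -> Z) :
  CC_regular dX dY f -> CC_regular dY dZ g -> CC_regular dX dZ (fun a => g (f a)).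
Proof. intros Hf Hg x Hx. apply Hg, Hf, Hx. Qed.

Lemma unbounded_not_cofinally_cauchy (u : nat -> R) :
  (forall m, INR m <= u m) -> ~ cofinally_cauchy dist_R u.
Proof.
  intros Hu H. destruct (H 1 Rlt_0_1) as [N [HN Hd]].
  destruct (HN 0%nat) as [n0 [_ Hn0]].
  destruct (INR_unbounded (u n0 + 1)) as [m0 Hm0].
  destruct (HN m0) as [m [Hm Hm']].
  specialize (Hd m n0 Hm' Hn0). unfold dist_R in Hd. apply Rabs_def2 in Hd.
  pose proof (le_INR _ _ Hm). specialize (Hu m). lra.
Qed.

Lemma Rabs_Rmax_sub_le a b a' b' c :
  Rabs (a - a') <= c -> Rabs (b - b') <= c -> Rabs (Rmax a b - Rmax a' b') <= c.
Proof.
  intros H1 H2. unfold Rmax.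
  destruct (Rle_dec a b), (Rle_dec a' b'); revert H1 H2; split_Rabs; lra.
Qed.

Fixpoint max_upto (g : nat -> R) (k : nat) : R :=
  match k with O => g O | S k' => Rmax (max_upto g k') (g k) end.

Lemma max_upto_ge (g : nat -> R) k n : (n <= k)%nat -> g n <= max_upto g k.
Proof.
  induction k as [|k IH]; intros Hn; simpl.
  - replace n with 0%nat by lia. lra.
  - destruct (Nat.eq_dec n (S k)) as [->|Hne]; [apply Rmax_r|].
    eapply Rle_trans; [apply IH; lia | apply Rmax_l].
Qed.

Lemma max_upto_stable (g : nat -> R) k j :
  (forall n, 0 <= g n) -> (forall n, (k < n)%nat -> g n = 0) -> (k <= j)%nat ->
  max_upto g j = max_upto g k.
Proof.
  intros Hpos Hzero. induction j as [|j IH]; intros Hkj.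
  - now replace k with 0%nat by lia.
  - destruct (Nat.eq_dec k (S j)) as [->|Hne]; [reflexivity|]. simpl.
    rewrite IH, Hzero by lia. apply Rmax_left.
    apply Rle_trans with (g 0%nat); [apply Hpos | apply max_upto_ge; lia].
Qed.

Lemma max_upto_Rabs_sub_le (g h : nat -> R) k c :
  (forall n, (n <= k)%nat -> Rabs (g n - h n) <= c) ->
  Rabs (max_upto g k - max_upto h k) <= c.
Proof.
  induction k as [|k IH]; intros H; simpl.
  - apply H. lia.
  - apply Rabs_Rmax_sub_le; [apply IH; intros n Hn|]; apply H; lia.
Qed.

Section Bumps.
Context {T : Type} (d : T -> T -> R) (y : nat -> T).

Definition bump (n : nat) (q : T) : R := INR n * Rmax 0 (1 - INR (S n) * d q (y n)).

(* The cutoff is only meaningful when the bumps at q eventually vanish, which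
   holds everywhere when y has no cluster point (bump_vanish_near). *)
Definition bump_sup (q : T) : R :=
  max_upto (fun n => bump n q)
    (epsilon (inhabits 0%nat) (fun K => forall n, (K < n)%nat -> bump n q = 0)).

Lemma bump_nonneg n q : 0 <= bump n q.
Proof. apply Rmult_le_pos; [apply pos_INR | apply Rmax_l]. Qed.

Lemma bump_eq0 n q : / INR (S n) <= d q (y n) -> bump n q = 0.
Proof.
  intros H. unfold bump. rewrite Rmax_left; [ring|].
  assert (HS : 0 < INR (S n)) by (apply lt_0_INR; lia).
  apply Rmult_le_compat_l with (r := INR (S n)) in H; [|lra].
  rewrite Rinv_r in H; lra.
Qed.

Lemma bump_sup_eq k q :
  (forall n, (k < n)%nat -> bump n q = 0) -> bump_sup q = max_upto (fun n => bump n q) k.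
Proof.
  intros Hk. unfold bump_sup.
  set (K := epsilon _ _).
  assert (HK : forall n, (K < n)%nat -> bump n q = 0) by (apply epsilon_spec; exists k; exact Hk).
  assert (Hpos : forall n, 0 <= bump n q) by (intro; apply bump_nonneg).
  rewrite <- (max_upto_stable _ K (Nat.max K k) Hpos HK), (max_upto_stable _ k (Nat.max K k) Hpos Hk)
    by lia.
  reflexivity.
Qed.

Hypothesis Hm : is_metric d.

Lemma bump_center n : bump n (y n) = INR n.
Proof. unfold bump. rewrite metric_refl by exact Hm. rewrite Rmax_right; [ring | lra]. Qed.

Lemma bump_lipschitz n q q' :
  Rabs (bump n q - bump n q') <= INR n * INR (S n) * d q q'.
Proof.
  unfold bump.
  pose proof (metric_triangle d Hm q q' (y n)).
  pose proof (metric_triangle_l d Hm q' q (y n)).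
  pose proof (metric_nonneg d Hm q q').
  pose proof (pos_INR n). pose proof (pos_INR (S n)).
  rewrite <- Rmult_minus_distr_l, Rabs_mult, Rabs_right, Rmult_assoc by lra.
  apply Rmult_le_compat_l; [lra|].
  apply Rabs_Rmax_sub_le.
  - rewrite Rminus_diag, Rabs_R0. nra.
  - replace (1 - INR (S n) * d q (y n) - (1 - INR (S n) * d q' (y n)))
      with (INR (S n) * (d q' (y n) - d q (y n))) by ring.
    rewrite Rabs_mult, Rabs_right by lra.
    apply Rmult_le_compat_l; [lra|]. split_Rabs; lra.
Qed.

Hypothesis Hy : forall p, ~ cluster_point d y p.

Lemma bump_vanish_near p : exists delta K, 0 < delta /\
  forall n q, (K <= n)%nat -> d q p < delta -> bump n q = 0.
Proof.
  pose proof (Hy p) as Hp. unfold cluster_point in Hp.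
  apply not_all_ex_not in Hp as [eps Hp]. apply imply_to_and in Hp as [He Hp].
  apply not_all_ex_not in Hp as [m Hp].
  destruct (inv_INR_S_eventually_lt (eps / 2)) as [K HK]; [lra|].
  exists (eps / 2), (Nat.max m K). split; [lra|]. intros n q Hn Hq.
  apply bump_eq0.
  assert (Hfar : eps <= d (y n) p).
  { apply Rnot_lt_le. intro Hlt. apply Hp. exists n. split; [lia | exact Hlt]. }
  pose proof (metric_triangle d Hm (y n) q p). rewrite (metric_sym d Hm (y n) q) in *.
  specialize (HK n ltac:(lia)). lra.
Qed.

Lemma bump_sup_ge_index m : INR m <= bump_sup (y m).
Proof.
  destruct (bump_vanish_near (y m)) as [delta [K [Hdelta HK]]].
  rewrite (bump_sup_eq (Nat.max K m)).
  - rewrite <- bump_center. apply (max_upto_ge (fun n => bump n (y m))). lia.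
  - intros n Hn. apply HK; [lia|]. rewrite metric_refl by exact Hm. exact Hdelta.
Qed.

Lemma bump_sup_continuous p : continuous_at d dist_R bump_sup p.
Proof.
  destruct (bump_vanish_near p) as [delta [K [Hdelta HK]]].
  assert (Hloc : forall q, d q p < delta -> bump_sup q = max_upto (fun n => bump n q) K).
  { intros q Hq. apply bump_sup_eq. intros n Hn. apply HK; [lia | exact Hq]. }
  apply (lipschitz_at_continuous_at _ _ _ _ delta (INR K * INR (S K))); [exact Hdelta| |].
  { apply Rmult_le_pos; apply pos_INR. }
  intros q Hq. unfold dist_R.
  rewrite (Hloc q Hq), (Hloc p) by (rewrite metric_refl by exact Hm; exact Hdelta).
  apply max_upto_Rabs_sub_le. intros n Hn.
  eapply Rle_trans; [apply bump_lipschitz|].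
  apply Rmult_le_compat_r; [apply metric_nonneg, Hm|].
  apply Rmult_le_compat; try apply pos_INR; apply le_INR; lia.
Qed.

End Bumps.

Lemma real_CC_regular_cofinally_cauchy {X Y : Type} (dX : X -> X -> R) (dY : Y -> Y -> R)
  (i : X -> Y) :
  is_metric dY -> (forall a b, dY (i a) (i b) = dX a b) -> cofinally_complete dY ->
  forall x : nat -> X,
  (forall f : X -> R, CC_regular dX dist_R f -> cofinally_cauchy dist_R (fun n => f (x n))) ->
  cofinally_cauchy dX x.
Proof.
  intros HmY Hiso Hcc x Hx.
  set (y := fun n => i (x n)).
  destruct (classic (exists p, cluster_point dY y p)) as [[p Hp] | Hnone].
  { apply (isometry_cofinally_cauchy dX dY i Hiso).
    exact (cluster_point_cofinally_cauchy dY HmY y p Hp). }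
  assert (Hy : forall p, ~ cluster_point dY y p) by (intros p Hp; apply Hnone; now exists p).
  exfalso. apply (unbounded_not_cofinally_cauchy (fun n => bump_sup dY y (y n))).
  - intro m. now apply bump_sup_ge_index.
  - apply (Hx (fun a => bump_sup dY y (i a))).
    apply CC_regular_comp with dY; [exact (isometry_CC_regular dX dY i Hiso)|].
    apply continuous_CC_regular; [exact is_metric_dist_R | exact Hcc|].
    intro p. now apply bump_sup_continuous.
Qed.

Theorem mainTheorem12 (X : Type) (d : X -> X -> R) (Xh : Type) (dh : Xh -> Xh -> R)
  (i : X -> Xh) (Hd : is_metric d) (Hc : is_completion d dh i) :
  let c1 := cofinally_BQ_complete dh in
  let c2 := cofinally_complete dh /\
    (forall (Y : Type) (rho : Y -> Y -> R), is_metric rho ->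
       forall f : X -> Y, CC_regular d rho f ->
       forall x : nat -> X, cofinally_BQC d x -> cofinally_cauchy rho (fun n => f (x n))) in
  let c3 := cofinally_complete dh /\
    (forall f : X -> R, CC_regular d dist_R f ->
       forall x : nat -> X, cofinally_BQC d x -> cofinally_cauchy dist_R (fun n => f (x n))) in
  let c4 := cofinally_complete dh /\
    (forall x : nat -> X, cofinally_BQC d x -> cofinally_cauchy d x) in
  (c1 <-> c2) /\ (c1 <-> c3) /\ (c1 <-> c4).
Proof.
  destruct Hc as [Hmh [_ [Hiso Hdense]]].
  intros c1 c2 c3 c4.
  assert (H12 : c1 -> c2).
  { intros H1. split; [now apply cofinally_BQ_complete_cofinally_complete|].
    intros Y rho _ f Hf x Hx. apply Hf.
    exact (cofinally_BQC_cauchy_of_BQ_complete d dh i Hiso Hmh H1 x Hx). }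
  assert (H23 : c2 -> c3).
  { intros [Hcc H2]. split; [exact Hcc|]. intros f. apply H2, is_metric_dist_R. }
  assert (H34 : c3 -> c4).
  { intros [Hcc H3]. split; [exact Hcc|]. intros x Hx.
    apply (real_CC_regular_cofinally_cauchy d dh i Hmh Hiso Hcc).
    intros f Hf. exact (H3 f Hf x Hx). }
  assert (H41 : c4 -> c1).
  { intros [Hcc H4]. exact (dense_cofinally_BQ_complete d dh i Hiso Hmh Hdense Hcc H4). }
  tauto.
Qed.
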